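(* Let $m\ge 1$ and $n\geq 2$ be integers. Then $$SO(Q(m,n))=m\Big(\frac{(m+n-2)(m-1)}{2}+(n-1)^2\big(\tfrac{n}{2}-1\big)\Big)\sqrt{2}+m(n-1)\sqrt{(m+n-2)^2+(n-1)^2}.$$
   Context: For a finite simple graph $G$ and vertex $u$, $d_u$ is the degree of $u$ in $G$, and the Sombor index is $SO(G)=\sum_{uv\in E(G)}\sqrt{d_u^2+d_v^2}$. The graph $Q(m,n)$ is obtained from the complete graph $K_m$ and $m$ pairwise disjoint copies of the complete graph $K_n$ by identifying each vertex of $K_m$ with a vertex of its own (unique) copy of $K_n$. *)

From HB Require Import structures.
From mathcomp Require Import all_boot all_order all_algebra.
Set Implicit Arguments. Unset Strict Implicit. Unset Printing Implicit Defensive.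
Import Order.TTheory GRing.Theory Num.Theory.
Local Open Scope ring_scope.

Definition deg (T : finType) (e : rel T) (u : T) : nat := #|[set v | e u v]|.

(* Sombor index: sum over edges uv of sqrt(d_u^2 + d_v^2).  Each edge is
   counted once by summing over ordered adjacent pairs (u,v) with u before v
   in the enumeration of T. *)
Definition sombor (R : rcfType) (T : finType) (e : rel T) : R :=
  \sum_(p : T * T | e p.1 p.2 && (enum_rank p.1 < enum_rank p.2)%N)
     Num.sqrt ((deg e p.1)%:R ^+ 2 + (deg e p.2)%:R ^+ 2).

(* The graph Q(m,n): vertices (i,j), i < m indexes the copy of K_n,
   j < n the vertex inside it; vertex (i,0) is the vertex of copy i
   identified with vertex i of K_m. *)
Definition Qrel (m n : nat) : rel ('I_m * 'I_n) :=
  fun x y =>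
    ((x.1 == y.1) && (x.2 != y.2))
    || [&& x.1 != y.1, nat_of_ord x.2 == 0%N & nat_of_ord y.2 == 0%N].

Arguments Qrel m n : clear implicits.
Arguments sombor R {T} e.

(* Every vertex of Q(m,n) other than the m roots has degree n-1, each root has
   degree m+n-2.  Summing the edge weight from both endpoints of every edge, a
   root sees n-1 non-roots and m-1 roots, and a non-root sees its root and n-2
   non-roots; halving gives the three edge classes with weights (m+n-2)√2,
   (n-1)√2 and √((m+n-2)²+(n-1)²). *)
From HB Require Import structures.
From mathcomp Require Import all_boot all_order all_algebra.
From mathcomp Require Import ring.
Set Implicit Arguments. Unset Strict Implicit. Unset Printing Implicit Defensive.
Import Order.TTheory GRing.Theory Num.Theory.
Local Open Scope ring_scope.

Lemma sum_unordered_pairs_double (V : nmodType) (T : finType) (e : rel T)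
    (F : T -> T -> V) :
  symmetric e -> irreflexive e -> (forall x y, F x y = F y x) ->
  (\sum_(p | e p.1 p.2 && (enum_rank p.1 < enum_rank p.2)%N) F p.1 p.2) *+ 2
  = \sum_(p | e p.1 p.2) F p.1 p.2.
Proof.
move=> esym eirr Fsym.
rewrite mulr2n [RHS](bigID (fun p : T * T => (enum_rank p.1 < enum_rank p.2)%N)) /=.
congr (_ + _).
have swapK : involutive (fun p : T * T => (p.2, p.1)) by case.
rewrite (reindex_inj (inv_inj swapK)) /=; apply: eq_big => [[x y]|p _] /=; last first.
  exact: Fsym.
rewrite esym; case exy: (e x y) => //=.
have /negbTE neq_rank : (enum_rank x : nat) != enum_rank y.
  rewrite (inj_eq val_inj) (inj_eq enum_rank_inj).
  by apply: contraTneq exy => ->; rewrite eirr.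
by rewrite -leqNgt ltn_neqAle eq_sym neq_rank.
Qed.

Lemma sombor_double (R : rcfType) (T : finType) (e : rel T) :
  symmetric e -> irreflexive e ->
  sombor R e *+ 2 =
  \sum_(p | e p.1 p.2) Num.sqrt ((deg e p.1)%:R ^+ 2 + (deg e p.2)%:R ^+ 2).
Proof.
move=> esym eirr.
apply: (sum_unordered_pairs_double
  (F := fun x y => Num.sqrt ((deg e x)%:R ^+ 2 + (deg e y)%:R ^+ 2))) => // x y.
by rewrite addrC.
Qed.

Lemma sqrtr_sqrD_self (R : rcfType) (a : R) :
  0 <= a -> Num.sqrt (a ^+ 2 + a ^+ 2) = a * Num.sqrt 2.
Proof.
move=> a_ge0.
by rewrite -mulr2n -[_ *+ 2]mulr_natr sqrtrM ?sqr_ge0 // sqrtr_sqr ger0_norm.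
Qed.

Lemma sumr_const_neq (W : nmodType) (I : finType) (k : I) (c : W) :
  \sum_(i | i != k) c = c *+ #|I|.-1.
Proof. by rewrite -(cardC1 k) -sumr_const. Qed.

Section QGraph.
Variables m n : nat.
Local Notation V := ('I_m.+1 * 'I_n.+1)%type.
Local Notation e := (Qrel m.+1 n.+1).

Lemma Qrel_sym : symmetric e.
Proof.
move=> x y; rewrite /Qrel (eq_sym x.1) (eq_sym x.2).
by case: (y.1 == x.1); case: (nat_of_ord x.2 == 0%N); case: (nat_of_ord y.2 == 0%N).
Qed.

Lemma Qrel_irr : irreflexive e.
Proof. by move=> x; rewrite /Qrel !eqxx. Qed.

Lemma sum_Qrel_nbr (W : nmodType) (h : V -> W) (x : V) :
  \sum_(y | e x y) h y =
  \sum_(j | j != x.2) h (x.1, j)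
  + (if x.2 == ord0 then \sum_(i | i != x.1) h (i, ord0) else 0).
Proof.
rewrite big_mkcond.
rewrite (eq_bigr (fun y => if e x (y.1, y.2) then h (y.1, y.2) else 0)); last by case.
rewrite -(pair_bigA _ (fun i j => if e x (i, j) then h (i, j) else 0)) /=.
rewrite (bigD1 x.1) //=; congr (_ + _).
  rewrite [RHS]big_mkcond; apply: eq_bigr => j _.
  by rewrite /Qrel /= eqxx orbF eq_sym.
have [root_x|/negbTE nonroot_x] := eqVneq x.2 ord0; last first.
  rewrite big1 // => i ne_ix; rewrite big1 // => j _.
  by rewrite /Qrel /= eq_sym (negbTE ne_ix) [_ == 0%N]nonroot_x.
apply: eq_bigr => i ne_ix; rewrite big_ord_recl big1 ?addr0.
  by rewrite /Qrel /= eq_sym (negbTE ne_ix) root_x.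
by move=> j _; rewrite /Qrel /= eq_sym (negbTE ne_ix) /= andbF.
Qed.

Lemma deg_Qrel (x : V) : deg e x = if x.2 == ord0 then (n + m)%N else n.
Proof.
rewrite /deg -sum1_card (eq_bigl (e x)) => [|y]; last by rewrite inE.
rewrite sum_Qrel_nbr !sumr_const_neq !card_ord.
rewrite -[1%N]/(1%R : nat) !natn.
by case: ifP => _ /=; rewrite ?addr0.
Qed.

Lemma sum_Qrel_nbr_deg (W : nmodType) (f : nat -> nat -> W) (x : V) :
  \sum_(y | e x y) f (deg e x) (deg e y) =
  if x.2 == ord0 then f (n + m)%N n *+ n + f (n + m)%N (n + m)%N *+ m
  else f n (n + m)%N + f n n *+ n.-1.
Proof.
under eq_bigr => y _ do rewrite !deg_Qrel.
rewrite sum_Qrel_nbr /=.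
have [root_x|nonroot_x] := eqVneq x.2 ord0.
  rewrite root_x (sumr_const_neq x.1) card_ord; congr (_ + _).
  under eq_bigr => j /negbTE nz do rewrite nz.
  by rewrite sumr_const_neq card_ord.
rewrite addr0.
case: (unliftP ord0 x.2) nonroot_x => [k ->|->]; last by rewrite eqxx.
move=> _; rewrite big_mkcond big_ord_recl /=; congr (_ + _).
under eq_bigr => j _ do rewrite (inj_eq lift_inj).
by rewrite -big_mkcond sumr_const_neq card_ord.
Qed.

Lemma sum_Qrel_edges (W : nmodType) (f : nat -> nat -> W) :
  \sum_(p | e p.1 p.2) f (deg e p.1) (deg e p.2) =
  (f (n + m)%N n *+ n + f (n + m)%N (n + m)%N *+ m
   + (f n (n + m)%N + f n n *+ n.-1) *+ n) *+ m.+1.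
Proof.
rewrite -(pair_big_dep xpredT e (fun x y => f (deg e x) (deg e y))) /=.
under eq_bigr => x _ do rewrite sum_Qrel_nbr_deg.
rewrite -(pair_bigA _ (fun _ j => if j == ord0 then
  f (n + m)%N n *+ n + f (n + m)%N (n + m)%N *+ m
  else f n (n + m)%N + f n n *+ n.-1)) /=.
rewrite sumr_const card_ord big_ord_recl /=.
by rewrite sumr_const card_ord.
Qed.
End QGraph.

Theorem mainTheorem2 (R : rcfType) (m n : nat) (hm : (1 <= m)%N) (hn : (2 <= n)%N) :
  sombor R (Qrel m n) =
    m%:R * ((m%:R + n%:R - 2) * (m%:R - 1) / 2 + (n%:R - 1) ^+ 2 * (n%:R / 2 - 1))
      * Num.sqrt 2
    + m%:R * (n%:R - 1) * Num.sqrt ((m%:R + n%:R - 2) ^+ 2 + (n%:R - 1) ^+ 2).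
Proof.
case: m hm => // m _; case: n hn => [|[|n]] // _.
have := sombor_double R (@Qrel_sym m n.+1) (@Qrel_irr m n.+1).
rewrite (sum_Qrel_edges m n.+1 (fun d1 d2 => Num.sqrt (d1%:R ^+ 2 + d2%:R ^+ 2))) /=.
rewrite !sqrtr_sqrD_self ?ler0n // [_ ^+ 2 + (n.+1 + m)%:R ^+ 2]addrC => SO2.
have -> : (m.+1%:R + n.+2%:R - 2) ^+ 2 + (n.+2%:R - 1) ^+ 2
          = (n.+1 + m)%:R ^+ 2 + n.+1%:R ^+ 2 :> R by ring.
apply: (@mulIf _ 2); first by rewrite pnatr_eq0.
rewrite mulr_natr SO2.
by field.
Qed.
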